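(* For the g-cell structure $\{(G_i,r_i),g_i^{i+1}\}_{i\in\mathbb{N}}$ constructed below, the quotient space $G^\ast=G_\infty/r$ is not regular: the point $\pi(\bar a)$, where $\bar a=(a_1,a_2,\dots)$, and the closed set $\pi(\{(b_1^k,b_2^k,\dots):k\in\mathbb{N}\})$, which does not contain $\pi(\bar a)$, cannot be separated by disjoint open sets. In particular, there exist spaces admitting a g-cell structure (with all $G_i$ discrete) which are not regular.
   Context: Construction. Let $L_1=0$ and $L_{i+1}=L_i+i$. All sets are discrete and all named elements distinct. $G_1=\{a_1\}\cup\{b_1^k:k\in\mathbb{N}\}$. For $i\ge2$, with $C^i_k=\{c^1_{i,k},c^2_{i,k}\}$ for $1\le k\le L_i$, $G_i=\{a_i\}\cup\{b_i^k:k\in\mathbb{N}\}\cup\bigcup_{k=1}^{L_i}C^i_k\cup\{d_i^k:k\in\mathbb{N}\}$. $r_i$ is the union of $\Delta_{G_i}$ with $\{(a_i,b_i^k),(b_i^k,a_i):k\ge i\}$, $\{(b_i^k,b_i^n):k,n\ge i\}$, $\{(a,b):a,b\in C^i_k,\ 1\le k\le L_i\}$ and $\{(d_i^{(i-1)j+k},b_i^k),(b_i^k,d_i^{(i-1)j+k}):1\le k<i,\ j\ge0\}$. The map $g_i^{i+1}:G_{i+1}\to G_i$: $a_{i+1}\mapsto a_i$; $b_{i+1}^k\mapsto b_i^k$; $c^1_{i+1,1}\mapsto a_i$; $c^2_{i+1,1}\mapsto b_i^i$; $c^\rho_{i+1,k}\mapsto c^\rho_{i,k-1}$ ($\rho=1,2$,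 $2\le k\le L_i+1$); $c^1_{i+1,k}\mapsto d_i^{k-(L_i+1)}$ and $c^2_{i+1,k}\mapsto b_i^{k-(L_i+1)}$ ($L_i+2\le k\le L_{i+1}$); $d_{i+1}^k\mapsto d_i^{(i-1)(j+1)+n}$ if $k=ij+n$, $0<n<i$, $j\ge0$; $d_{i+1}^k\mapsto a_i$ if $k=ij$, $j\ge1$. $G_\infty=\{(x_n)\in\prod G_n:g_i^{i+1}(x_{i+1})=x_i\ \forall i\}$ with the product topology; the natural relation $r=\{(\bar x,\bar y)\in G_\infty^2:(x_n,y_n)\in r_n\ \forall n\}$ is an equivalence relation (this sequence is a g-cell structure); $G^\ast=G_\infty/r$ has the quotient topology and $\pi:G_\infty\to G^\ast$ is the quotient map. A space admits a g-cell structure if it is homeomorphic to $G^\ast$ for some inverse sequence of cellular graphs (pairs of a nonempty space and a reflexive symmetric relation, with continuous edge-preserving bonding maps) whose natural relation is an equivalence relation. Regular means: every point and closed set not containing it have disjoint open neighbourhoods. *)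

From Stdlib Require Import Arith Lia.

(* L_1 = 0, L_{i+1} = L_i + i  (L_0 is a dummy value) *)
Fixpoint L (i : nat) : nat :=
  match i with
  | 0 => 0
  | 1 => 0
  | S (S _ as p) => L p + p
  end.

(* Names of elements: a, b^k, c^rho_k (rho = true for 1, false for 2), d^k.
   The element x of G_i is named with the same constructor for every i. *)
Inductive elt : Type :=
| A : elt
| B : nat -> elt
| C : bool -> nat -> elt
| D : nat -> elt.

Definition inG (i : nat) (e : elt) : Prop :=
  1 <= i /\
  match e with
  | A => True
  | B k => 1 <= k
  | C _ k => 2 <= i /\ 1 <= k <= L i
  | D k => 2 <= i /\ 1 <= k
  end.

Definition r (i : nat) (x y : elt) : Prop :=
  inG i x /\ inG i y /\
  ( x = y
  \/ (exists k, i <= k /\ ((x = A /\ y = B k) \/ (x = B k /\ y = A)))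
  \/ (exists k n, i <= k /\ i <= n /\ x = B k /\ y = B n)
  \/ (exists k rho rho', 1 <= k <= L i /\ x = C rho k /\ y = C rho' k)
  \/ (exists k j, 1 <= k < i /\
        ((x = D ((i - 1) * j + k) /\ y = B k) \/
         (x = B k /\ y = D ((i - 1) * j + k))))).

Definition g (i : nat) (e : elt) : elt :=
  match e with
  | A => A
  | B k => B k
  | C rho k =>
      if k =? 1 then (if rho then A else B i)
      else if k <=? L i + 1 then C rho (k - 1)
      else (if rho then D (k - (L i + 1)) else B (k - (L i + 1)))
  | D k =>
      if k mod i =? 0 then A
      else D ((i - 1) * (k / i + 1) + k mod i)
  end.

(* G_infty.  A point is coded by x : nat -> elt with  x n = x_{n+1}
   (coordinate n+1), so that indices start at 1 as in the paper. *)
Definition is_thread (x : nat -> elt) : Prop :=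
  forall n, inG (S n) (x n) /\ g (S n) (x (S n)) = x n.

Definition Ginf : Type := { x : nat -> elt | is_thread x }.

Definition coord (x : Ginf) (n : nat) : elt := proj1_sig x n.

(* product topology of the discrete spaces G_n, restricted to G_infty:
   U is open iff each point of U has a basic cylinder neighbourhood
   (fixing finitely many coordinates, wlog the first n) inside U *)
Definition open_inf (U : Ginf -> Prop) : Prop :=
  forall x, U x -> exists n, forall y : Ginf,
      (forall m, m < n -> coord y m = coord x m) -> U y.

Definition rinf (x y : Ginf) : Prop := forall n, r (S n) (coord x n) (coord y n).

Definition rclass (x : Ginf) : Ginf -> Prop := fun y => rinf x y.

Definition Gstar : Type := { S : Ginf -> Prop | exists x, S = rclass x }.

Definition pi (x : Ginf) : Gstar := exist _ (rclass x) (ex_intro _ x eq_refl).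

Definition open_star (V : Gstar -> Prop) : Prop := open_inf (fun x => V (pi x)).
Definition closed_star (F : Gstar -> Prop) : Prop := open_star (fun p => ~ F p).

Definition regular_star : Prop :=
  forall (p : Gstar) (F : Gstar -> Prop), closed_star F -> ~ F p ->
    exists U V : Gstar -> Prop, open_star U /\ open_star V /\ U p /\
      (forall q, F q -> V q) /\ (forall q, U q -> V q -> False).

Lemma abar_thread : is_thread (fun _ => A).
Proof. intro n; split; [split; [lia | exact I] | reflexivity]. Qed.
Definition abar : Ginf := exist _ (fun _ => A) abar_thread.

(* the points (b_1^k, b_2^k, ...), k >= 1, indexed by k-1 *)
Lemma bseq_thread (k : nat) : is_thread (fun _ => B (S k)).
Proof. intro n; split; [split; [lia | simpl; lia] | reflexivity]. Qed.
Definition bseq (k : nat) : Ginf := exist _ (fun _ => B (S k)) (bseq_thread k).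

Definition Bset : Gstar -> Prop := fun p => exists k, p = pi (bseq k).

(* The key fact about threads
   is that a d-element attached to b^k (d^{mj+k}) has its multiplier j
   increased by one at each step down, so no thread can consist of such
   elements forever (no_D_ray); consequently a thread r-related to b^k at all
   high coordinates is b^k there (B_ray_absorbs).  This yields transitivity of
   the natural relation r, and shows that the r-class of the constant thread
   b^k is a singleton, whence pi(B) is closed and misses pi(a-bar).
   Non-separation: for every n, N the two threads through a suitable cell
   c^1, c^2 high up are r-related, the first projecting down to a d-element
   and then to a on the first n coordinates, the second to b^{n+1} on the
   first N coordinates (abar_bseq_linked).  So every basic neighbourhood of
   a-bar meets the r-saturation of every basic neighbourhood of b^{n+1}. *)

From Stdlib Require Import Arith Lia ProofIrrelevance FunctionalExtensionality
  PropExtensionality Classical.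

Lemma L_S i : 1 <= i -> L (S i) = L i + i.
Proof. destruct i as [|[|i]]; [lia | reflexivity | reflexivity]. Qed.

(* L grows by at least one per level: it bounds the C-indices of the
   threads built in the non-separation argument. *)
Lemma L_grows a b : 1 <= a <= b -> L a + (b - a) <= L b.
Proof.
  intros [Ha Hab]. induction b as [|b IH]; [lia|].
  destruct (Nat.eq_dec a (S b)) as [->|Hne]; [lia|].
  rewrite L_S by lia. specialize (IH ltac:(lia)). lia.
Qed.

Lemma divmod_of_decomposition m a k :
  k < m -> (m * a + k) mod m = k /\ (m * a + k) / m = a.
Proof.
  intros H. split.
  - symmetry. apply (Nat.mod_unique _ _ a); lia.
  - symmetry. apply (Nat.div_unique _ _ _ k); lia.
Qed.

Lemma g_D_shift m a k :
  1 <= k <= m -> g (S m) (D (S m * a + k)) = D (m * (a + 1) + k).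
Proof.
  intros Hk. unfold g. destruct (divmod_of_decomposition (S m) a k ltac:(lia)) as [Emod Ediv].
  rewrite Emod, Ediv. destruct (Nat.eqb_spec k 0); [lia|].
  do 2 f_equal. lia.
Qed.

Lemma g_D_multiple m a : g (S m) (D (S m * a + S m)) = A.
Proof.
  unfold g. replace (S m * a + S m) with (S m * (a + 1) + 0) by lia.
  now rewrite (proj1 (divmod_of_decomposition (S m) (a + 1) 0 ltac:(lia))).
Qed.

Lemma g_C_shift i rho idx : 1 < idx <= L i + 1 -> g i (C rho idx) = C rho (idx - 1).
Proof.
  intros H. unfold g.
  destruct (Nat.eqb_spec idx 1); [lia|].
  destruct (Nat.leb_spec idx (L i + 1)); [reflexivity | lia].
Qed.

Lemma g_C_top i rho idx :
  L i + 1 < idx -> g i (C rho idx) = if rho then D (idx - (L i + 1)) else B (idx - (L i + 1)).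
Proof.
  intros H. unfold g.
  destruct (Nat.eqb_spec idx 1); [lia|].
  destruct (Nat.leb_spec idx (L i + 1)); [lia | reflexivity].
Qed.

Lemma g_preimage_B m e k :
  k <= m -> g (S m) e = B k -> e = B k \/ exists idx, e = C false idx.
Proof.
  intros Hk He. destruct e as [|k'|[|] idx|d]; unfold g in He.
  - discriminate.
  - now left.
  - destruct (idx =? 1); [discriminate|]. destruct (idx <=? L (S m) + 1); discriminate.
  - right. now exists idx.
  - destruct (d mod S m =? 0); discriminate.
Qed.

Lemma g_inG i e : 1 <= i -> inG (S i) e -> inG i (g i e).
Proof.
  intros Hi He. destruct e as [|k|rho k|k]; unfold inG in *; unfold g.
  - split; auto.
  - tauto.
  - destruct He as [_ [_ Hk]].
    destruct (Nat.eqb_spec k 1); [destruct rho; simpl; lia|].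
    assert (2 <= i) by (destruct (Nat.eq_dec i 1) as [->|]; [simpl in Hk; lia | lia]).
    rewrite L_S in Hk by lia.
    destruct (Nat.leb_spec k (L i + 1)); [|destruct rho]; simpl; lia.
  - destruct He as [_ [_ Hk]].
    destruct (Nat.eqb_spec (k mod i) 0); [split; auto|].
    assert (2 <= i) by (destruct (Nat.eq_dec i 1) as [->|]; [rewrite Nat.mod_1_r in *; lia | lia]).
    pose proof (Nat.mod_upper_bound k i ltac:(lia)). lia.
Qed.

Ltac destruct_r H :=
  destruct H as (?Hx & ?Hy & [?E
    | [[?k [?Hk [[?E1 ?E2]|[?E1 ?E2]]]]
    | [[?k [?n [?Hk [?Hn [?E1 ?E2]]]]]
    | [[?k [?rho [?rho' [?Hk [?E1 ?E2]]]]]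
    | [?k [?j [?Hk [[?E1 ?E2]|[?E1 ?E2]]]]]]]]]).

Ltac solve_edge :=
  first [ left; reflexivity
  | right; left; eexists; split;
      [| first [left; split; reflexivity | right; split; reflexivity]]; lia
  | right; right; left; do 2 eexists; split; [|split; [|split; reflexivity]]; lia
  | right; right; right; left; do 3 eexists; split; [|split; reflexivity]; lia
  | right; right; right; right; do 2 eexists; split;
      [| first [left; split; reflexivity | right; split; reflexivity]]; lia ].

Lemma r_refl i x : inG i x -> r i x x.
Proof. intro H. split; [|split]; auto. Qed.

Lemma r_sym i x y : r i x y -> r i y x.
Proof. intro H. destruct_r H; subst; (split; [assumption | split; [assumption|]]); solve_edge. Qed.

Lemma D_attach_unique m j j' k k' :
  1 <= k <= m -> 1 <= k' <= m -> m * j + k = m * j' + k' -> k = k'.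
Proof.
  intros Hk Hk' E. destruct (Nat.lt_total j j') as [Hl|[->|Hl]]; [| lia |].
  - replace j' with (j + 1 + (j' - j - 1)) in E by lia. nia.
  - replace j with (j' + 1 + (j - j' - 1)) in E by lia. nia.
Qed.

(* r_i is transitive except through a path d -- b^k -- d', which is
   exactly why the natural relation on G_infty needs an argument. *)
Lemma r_trans_except i x y z : r i x y -> r i y z ->
  r i x z \/ exists k j1 j2, x = D ((i - 1) * j1 + k) /\ y = B k /\
                             z = D ((i - 1) * j2 + k) /\ 1 <= k < i.
Proof.
  intros H1 H2. destruct_r H1; destruct_r H2; subst; try discriminate;
  repeat match goal with
  | H : B _ = B _ |- _ => injection H as H; subst
  | H : D _ = D _ |- _ => injection H as H
  | H : C _ _ = C _ _ |- _ => injection H as ?H ?H; subst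
  | H : A = A |- _ => clear H
  end;
  try (exfalso; lia);
  first [ left; (split; [assumption | split; [assumption|]]); solve_edge
        | right; do 3 eexists; split; [reflexivity | split; [reflexivity | split; [reflexivity | lia]]]
        | idtac ].
  left. assert (k = k0) as <- by (apply (D_attach_unique (i - 1) j j0); lia).
  now apply r_refl.
Qed.

Lemma r_B_right m X k : k <= m -> r (S m) X (B k) -> X = B k \/ exists j, X = D (m * j + k).
Proof.
  intros Hk H. destruct_r H; subst; try discriminate;
  repeat match goal with H : B _ = B _ |- _ => injection H as H; subst end;
  try (exfalso; lia).
  - now left.
  - right. exists j. do 2 f_equal. lia.
Qed.

Lemma r_C_right i X rho idx : r i X (C rho idx) -> exists rho', X = C rho' idx.
Proof.
  intros H. destruct_r H; subst; try discriminate; [eauto|].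
  injection E2 as <- <-. eauto.
Qed.

Lemma g_DB_edge i j k : 1 <= i -> 1 <= k <= i -> r i (g i (D (i * j + k))) (B k).
Proof.
  intros Hi Hk. destruct i as [|m]; [lia|].
  destruct (Nat.eq_dec k (S m)) as [->|Hne].
  - rewrite g_D_multiple. split; [|split]; [split; simpl; lia .. |].
    right; left. exists (S m). split; [lia | now left].
  - rewrite g_D_shift by lia. split; [|split]; [split; simpl; lia .. |].
    right; right; right; right. exists k, (j + 1). split; [lia|].
    left. split; [do 2 f_equal; lia | reflexivity].
Qed.

Lemma g_edge i x y : 1 <= i -> r (S i) x y -> r i (g i x) (g i y).
Proof.
  intros Hi H. destruct_r H; subst.
  6: replace (S i - 1) with i by lia; apply g_DB_edge; lia.
  6: replace (S i - 1) with i by lia; apply r_sym, g_DB_edge; lia.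
  1: now apply r_refl, g_inG.
  all: pose proof (g_inG i _ Hi Hx); pose proof (g_inG i _ Hi Hy); cbn [g] in *;
       split; [assumption | split; [assumption|]]; try solve_edge.
  (* the cell C^{i+1}_k: its image is a cell, an edge a -- b^i, or an edge d -- b *)
  assert (i = 1 \/ 2 <= i) as [->|Hi2] by lia.
  - simpl in Hk. destruct (Nat.eqb_spec k 1); [|lia]. destruct rho, rho'; solve_edge.
  - rewrite L_S in Hk by lia.
    destruct (Nat.eqb_spec k 1); [destruct rho, rho'; solve_edge|].
    destruct (Nat.leb_spec k (L i + 1)); [solve_edge|].
    destruct rho, rho'; try solve_edge;
      right; right; right; right; exists (k - (L i + 1)), 0;
      (split; [lia | first [left; split; [f_equal; lia | reflexivity]
                           | right; split; [reflexivity | f_equal; lia]]]).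
Qed.

Lemma coord_g (x : Ginf) n : g (S n) (coord x (S n)) = coord x n.
Proof. exact (proj2 (proj2_sig x n)). Qed.

Lemma coord_inG (x : Ginf) n : inG (S n) (coord x n).
Proof. exact (proj1 (proj2_sig x n)). Qed.

Lemma thread_agree_down (x z : Ginf) m n :
  n <= m -> coord x m = coord z m -> coord x n = coord z n.
Proof.
  intros Hnm E. induction m as [|m IH].
  - now replace n with 0 by lia.
  - destruct (Nat.eq_dec n (S m)) as [->|Hne]; [exact E|].
    apply IH; [lia|]. now rewrite <- (coord_g x), <- (coord_g z), E.
Qed.

Lemma fixed_down (x : Ginf) e m n :
  (forall i, g i e = e) -> n <= m -> coord x m = e -> coord x n = e.
Proof.
  intros He Hnm E. induction m as [|m IH].
  - now replace n with 0 by lia.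
  - destruct (Nat.eq_dec n (S m)) as [->|Hne]; [exact E|].
    apply IH; [lia|]. now rewrite <- (coord_g x), E.
Qed.

Lemma rel_down (x y : Ginf) m n :
  n <= m -> r (S m) (coord x m) (coord y m) -> r (S n) (coord x n) (coord y n).
Proof.
  intros Hnm H. induction m as [|m IH].
  - now replace n with 0 by lia.
  - destruct (Nat.eq_dec n (S m)) as [->|Hne]; [exact H|].
    apply IH; [lia|]. rewrite <- (coord_g x), <- (coord_g y). apply g_edge; [lia | exact H].
Qed.

Lemma D_descends (x : Ginf) c t a k :
  1 <= k <= c -> coord x (c + t) = D ((c + t) * a + k) -> coord x c = D (c * (a + t) + k).
Proof.
  intros Hk. revert a. induction t as [|t IH]; intros a E.
  - now rewrite Nat.add_0_r in *.
  - replace (a + S t) with ((a + 1) + t) by lia. apply IH.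
    rewrite <- coord_g. replace (c + S t) with (S (c + t)) in E by lia.
    rewrite E. apply g_D_shift. lia.
Qed.

(* Hence no thread consists of d-elements attached to a fixed b^k from some
   coordinate on: the multiplier would have to decrease forever. *)
Lemma no_D_ray (x : Ginf) m k :
  1 <= k <= m -> ~ (forall t, exists a, coord x (m + t) = D ((m + t) * a + k)).
Proof.
  intros Hk Hray. destruct (Hray 0) as [a0 E0]. destruct (Hray (S a0)) as [a E].
  apply D_descends in E; [|lia]. rewrite Nat.add_0_r in E0. rewrite E0 in E.
  injection E as E. assert (a0 = a + S a0) by (apply (Nat.mul_cancel_l _ _ m); lia). lia.
Qed.

Lemma B_ray_absorbs (x : Ginf) m k :
  1 <= k <= m -> (forall t, r (S (m + t)) (coord x (m + t)) (B k)) -> coord x m = B k.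
Proof.
  intros Hk Hrel. destruct (classic (exists t, coord x (m + t) = B k)) as [[t Et]|Hnot].
  - apply (fixed_down x (B k) (m + t)); auto. lia.
  - exfalso. apply (no_D_ray x m k Hk). intro t.
    destruct (r_B_right (m + t) _ k ltac:(lia) (Hrel t)) as [Eb|Ed]; [|exact Ed].
    exfalso. apply Hnot. now exists t.
Qed.

Lemma rinf_refl x : rinf x x.
Proof. intros n. apply r_refl, coord_inG. Qed.

Lemma rinf_sym x y : rinf x y -> rinf y x.
Proof. intros H n. apply r_sym, H. Qed.

(* In a path x -- y -- z of threads with x_n <> z_n, both different from
   y_n = b^k, y stays b^k above n: a preimage c^2 of b^k would force x and z
   to the same point c^1 of a cell, hence x_n = z_n. *)
Lemma B_between_persists (x y z : Ginf) n k :
  rinf x y -> rinf y z -> 1 <= k <= n ->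
  coord x n <> B k -> coord z n <> B k -> coord x n <> coord z n ->
  coord y n = B k -> forall t, coord y (n + t) = B k.
Proof.
  intros Hxy Hyz Hk Hx Hz Hxz Ey t. induction t as [|t IH]; [now rewrite Nat.add_0_r|].
  replace (n + S t) with (S (n + t)) by lia. set (m := n + t) in *.
  assert (Hmx : coord x m <> B k) by (intro E; apply Hx; apply (fixed_down x (B k) m); auto; lia).
  assert (Hmz : coord z m <> B k) by (intro E; apply Hz; apply (fixed_down z (B k) m); auto; lia).
  assert (Hpre : g (S m) (coord y (S m)) = B k) by now rewrite coord_g.
  destruct (g_preimage_B m _ k ltac:(lia) Hpre) as [Eb|[idx Ec]]; [exact Eb|].
  assert (cell_top : forall w : Ginf, coord w m <> B k ->
            r (S (S m)) (coord w (S m)) (coord y (S m)) -> coord w (S m) = C true idx).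
  { intros w Hw Hr. rewrite Ec in Hr. destruct (r_C_right _ _ _ _ Hr) as [[|] Cw]; [exact Cw|].
    exfalso. apply Hw. now rewrite <- coord_g, Cw, <- Ec. }
  exfalso. apply Hxz. apply (thread_agree_down x z (S m)); [lia|].
  now rewrite (cell_top x Hmx (Hxy _)), (cell_top z Hmz (r_sym _ _ _ (Hyz _))).
Qed.

(* The natural relation is transitive: the only obstruction of
   r_trans_except, a path d -- b^k -- d' with d <> d', would make y a ray of
   b^k, which then absorbs x (B_ray_absorbs) although x_n is a d-element. *)
Lemma rinf_trans x y z : rinf x y -> rinf y z -> rinf x z.
Proof.
  intros Hxy Hyz n.
  destruct (r_trans_except _ _ _ _ (Hxy n) (Hyz n)) as [H|[k [j1 [j2 [Ex [Ey [Ez Hk]]]]]]];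
    [exact H|].
  replace (S n - 1) with n in * by lia.
  destruct (Nat.eq_dec j1 j2) as [<-|Hj]; [rewrite Ex, <- Ez; apply r_refl, coord_inG|].
  exfalso.
  assert (Hxz : coord x n <> coord z n).
  { rewrite Ex, Ez. intro E. injection E as E. apply Hj. apply (Nat.mul_cancel_l _ _ n); lia. }
  assert (Hray : forall t, coord y (n + t) = B k).
  { apply (B_between_persists x y z); auto; [lia | now rewrite Ex | now rewrite Ez]. }
  assert (Hxb : coord x n = B k).
  { apply B_ray_absorbs; [lia|]. intro t. rewrite <- (Hray t). apply Hxy. }
  congruence.
Qed.

Lemma exist_ext (T : Type) (P : T -> Prop) (a b : T) (pa : P a) (pb : P b) :
  a = b -> exist P a pa = exist P b pb.
Proof. intros ->. f_equal. apply proof_irrelevance. Qed.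

Lemma pi_eq x y : rinf x y -> pi x = pi y.
Proof.
  intro H. apply exist_ext. extensionality w. apply propositional_extensionality.
  split; intro H'.
  - exact (rinf_trans _ _ _ (rinf_sym _ _ H) H').
  - exact (rinf_trans _ _ _ H H').
Qed.

Lemma pi_rinf x y : pi x = pi y -> rinf x y.
Proof.
  intro H. apply (f_equal (@proj1_sig _ _)) in H. simpl in H.
  assert (Hy : rclass y y) by apply rinf_refl. rewrite <- H in Hy. exact Hy.
Qed.

Lemma bseq_class y k : rinf y (bseq k) -> forall n, coord y n = B (S k).
Proof.
  intros H n. apply (fixed_down y _ (n + S k)); auto; [lia|].
  apply B_ray_absorbs; [lia|]. intro t. exact (H (n + S k + t)).
Qed.

Lemma Bset_char y : Bset (pi y) -> exists k, forall n, coord y n = B (S k).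
Proof. intros [k Hk]. exists k. apply bseq_class, pi_rinf, Hk. Qed.

Lemma Bset_intro y k : (forall n, coord y n = B (S k)) -> Bset (pi y).
Proof.
  intro H. exists k. f_equal. destruct y as [f Hf]. apply exist_ext.
  extensionality n. apply H.
Qed.

(* pi(B) is closed: a thread outside it differs, within finitely many
   coordinates, from every constant thread b^k. *)
Lemma closed_Bset : closed_star Bset.
Proof.
  intros x Hx.
  assert (Hsep : exists m, forall k, coord x 0 = B (S k) -> coord x m <> B (S k)).
  { destruct (coord x 0) as [| [|k] | rho idx | d] eqn:E0.
    3: { destruct (classic (exists m, coord x m <> B (S k))) as [[m Hm]|Hall].
         - exists m. intros k' E. injection E as <-. exact Hm.
         - exfalso. apply Hx, (Bset_intro x k). intro n.
           apply NNPP. intro Hn. apply Hall. now exists n. }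
    all: exists 0; intros k' E; discriminate. }
  destruct Hsep as [m Hm]. exists (S m). intros y Hy HB.
  destruct (Bset_char y HB) as [k Hk].
  apply (Hm k); rewrite <- Hy by lia; apply Hk.
Qed.

Lemma notB_abar : ~ Bset (pi abar).
Proof. intro HB. destruct (Bset_char abar HB) as [k Hk]. discriminate (Hk 0). Qed.

(* lower t c e : the coordinate c of a thread whose coordinate c + t is e. *)
Fixpoint lower (t c : nat) (e : elt) : elt :=
  match t with
  | 0 => e
  | S t' => g (S c) (lower t' (S c) e)
  end.

Lemma lower_inG t c e : inG (S (c + t)) e -> inG (S c) (lower t c e).
Proof.
  revert c. induction t as [|t IH]; intros c He; simpl.
  - now rewrite Nat.add_0_r in He.
  - apply g_inG; [lia|]. apply IH. now replace (S c + t) with (c + S t) by lia.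
Qed.

(* The thread through the point c^rho_idx of G_{N+1}: above N it climbs the
   cells C^{c+1}_{idx + (c - N)}, below N it is obtained by projection. *)
Definition cell_seq (N : nat) (rho : bool) (idx : nat) (c : nat) : elt :=
  if N <=? c then C rho (idx + (c - N)) else lower (N - c) c (C rho idx).

Lemma cell_seq_thread N rho idx : 1 <= idx <= L (S N) -> is_thread (cell_seq N rho idx).
Proof.
  intros Hidx c. unfold cell_seq.
  assert (HL : forall c, N <= c -> L (S N) + (c - N) <= L (S c)) by (intros c' Hc'; pose proof (L_grows (S N) (S c') ltac:(lia)); lia).
  assert (HN : 1 <= N) by (destruct N; simpl in Hidx; lia).
  destruct (Nat.leb_spec N c); destruct (Nat.leb_spec N (S c)); try lia.
  - specialize (HL c ltac:(lia)). split; [repeat split; lia|].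
    rewrite g_C_shift by lia. f_equal. lia.
  - split; [apply lower_inG; replace (c + (N - c)) with N by lia; repeat split; lia|].
    replace (N - c) with 1 by lia. replace (S c - N) with 0 by lia. now rewrite Nat.add_0_r.
  - split; [apply lower_inG; replace (c + (N - c)) with N by lia; repeat split; lia|].
    now replace (N - c) with (S (N - S c)) by lia.
Qed.

Definition cell_thread N rho idx (H : 1 <= idx <= L (S N)) : Ginf :=
  exist _ (cell_seq N rho idx) (cell_seq_thread N rho idx H).

Lemma cell_thread_top N rho idx H : coord (cell_thread N rho idx H) N = C rho idx.
Proof.
  unfold coord, cell_thread, cell_seq; simpl. rewrite Nat.leb_refl. f_equal. lia.
Qed.

(* The two threads through a cell are r-related: at every coordinate >= N
   they form a cell, and edges propagate downwards. *)
Lemma cell_threads_related N idx H :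
  rinf (cell_thread N true idx H) (cell_thread N false idx H).
Proof.
  intro n. apply (rel_down _ _ (n + N)); [lia|].
  assert (Htop : forall rho, coord (cell_thread N rho idx H) (n + N) = C rho (idx + n)).
  { intro rho. unfold coord, cell_thread, cell_seq; simpl.
    rewrite (proj2 (Nat.leb_le N (n + N))) by lia. f_equal. lia. }
  pose proof (coord_inG (cell_thread N true idx H) (n + N)) as Hin.
  rewrite !Htop in *. unfold inG in Hin. split; [exact Hin | split; [unfold inG; lia|]].
  right; right; right; left. exists (idx + n), true, false. split; [lia | split; reflexivity].
Qed.

(* They are the two threads through
   the cell C^{P+2}_{L_{P+1}+1+k} (k = n+1, P = k+N), which projects to
   d_{P+1}^k, b_{P+1}^k; the d-element descends to d_k^{k(N+1)} and then to a. *)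
Lemma abar_bseq_linked n N :
  exists y z : Ginf, rinf y z /\ (forall m, m < n -> coord y m = A) /\
                     (forall m, m < N -> coord z m = B (S n)).
Proof.
  set (P := S n + N). set (idx := L (S P) + 1 + S n).
  assert (Hidx : 1 <= idx <= L (S (S P))) by (unfold idx; rewrite (L_S (S P)) by lia; lia).
  set (y := cell_thread (S P) true idx Hidx). set (z := cell_thread (S P) false idx Hidx).
  exists y, z. split; [apply cell_threads_related|]. split.
  - assert (HyP : coord y P = D ((S n + N) * 0 + S n)).
    { rewrite <- coord_g. unfold y. rewrite cell_thread_top, g_C_top by (unfold idx; lia).
      f_equal. unfold idx. lia. }
    apply D_descends in HyP; [|lia].
    assert (Hyn : coord y n = A) by (rewrite <- coord_g, HyP; apply g_D_multiple).
    intros m Hm. apply (fixed_down y A n); [reflexivity | lia | exact Hyn].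
  - assert (HzP : coord z P = B (S n)).
    { rewrite <- coord_g. unfold z. rewrite cell_thread_top, g_C_top by (unfold idx; lia).
      f_equal. unfold idx. lia. }
    intros m Hm. apply (fixed_down z _ P); [reflexivity | unfold P; lia | exact HzP].
Qed.

(* pi(a-bar) and pi(B) have no disjoint open neighbourhoods: basic
   neighbourhoods of a-bar and of a point b^{n+1} always contain r-related
   threads. *)
Lemma no_separation : ~ (exists U V : Gstar -> Prop, open_star U /\ open_star V /\ U (pi abar) /\
       (forall q, Bset q -> V q) /\ (forall q, U q -> V q -> False)).
Proof.
  intros [U [V [HU [HV [HUa [HBV Hdis]]]]]].
  destruct (HU abar HUa) as [n Hn].
  destruct (HV (bseq n) (HBV _ (ex_intro _ n eq_refl))) as [N HN].
  destruct (abar_bseq_linked n N) as [y [z [Hyz [Hy Hz]]]].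
  apply (Hdis (pi y)).
  - apply Hn. intros m Hm. now apply Hy.
  - rewrite (pi_eq _ _ Hyz). apply HN. intros m Hm. now apply Hz.
Qed.

Theorem mainTheorem10 :
  (forall i e, 1 <= i -> inG (S i) e -> inG i (g i e)) /\
  (forall i x y, 1 <= i -> r (S i) x y -> r i (g i x) (g i y)) /\
  (forall x : Ginf, rinf x x) /\
  (forall x y : Ginf, rinf x y -> rinf y x) /\
  (forall x y z : Ginf, rinf x y -> rinf y z -> rinf x z) /\
  closed_star Bset /\
  ~ Bset (pi abar) /\
  ~ (exists U V : Gstar -> Prop, open_star U /\ open_star V /\ U (pi abar) /\
       (forall q, Bset q -> V q) /\ (forall q, U q -> V q -> False)) /\
  ~ regular_star.
Proof.
  refine (conj g_inG (conj g_edge (conj rinf_refl (conj rinf_sym (conj rinf_trans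
           (conj closed_Bset (conj notB_abar (conj no_separation _)))))))).
  intro Hreg. exact (no_separation (Hreg (pi abar) Bset closed_Bset notB_abar)).
Qed.
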